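(* Let $(\mathcal{I},+,\times,0,1)$ be a commutative idempotent semiring and let $m,n\ge 1$ and $\alpha_1,\dots,\alpha_m,\beta_1,\dots,\beta_n\in\mathcal{I}$. Let $f=\prod_{i=1}^m(x+\alpha_i)=\sum_{k=0}^m a_k x^{m-k}$ and $g=\prod_{j=1}^n(x+\beta_j)=\sum_{k=0}^n b_k x^{n-k}$ in $\mathcal{I}[x]$, so that $a_0=b_0=1$, $a_k=\sum_{1\le i_1<\dots<i_k\le m}\alpha_{i_1}\cdots\alpha_{i_k}$ and $b_k=\sum_{1\le j_1<\dots<j_k\le n}\beta_{j_1}\cdots\beta_{j_k}$. Define the resultant $\mathbf{R}=\prod_{i=1}^m\prod_{j=1}^n(\alpha_i+\beta_j)\in\mathcal{I}$ and the Sylvester expression $\mathbf{S}=\operatorname{per}(M)=\sum_{\sigma\in \mathfrak{S}_{m+n}}\prod_{i=1}^{m+n}M_{i\sigma(i)}\in\mathcal{I}$, where $M$ is the $(m+n)\times(m+n)$ Sylvester matrix: for $1\le j\le n$, row $j$ of $M$ has entry $a_k$ in column $j+k$ ($0\le k\le m$) and $0$ elsewhere; for $1\le i\le m$, row $n+i$ has entry $b_k$ in column $i+k$ ($0\le k\le n$) and $0$ elsewhere. Then $\mathbf{R}=\mathbf{S}$.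
   Context: A commutative idempotent semiring is a set $\mathcal{I}$ with binary operations $+,\times$ and elements $0,1$ such that $+$ is commutative, associative, has identity $0$ and is idempotent ($a+a=a$); $\times$ is commutative, associative, has identity $1$, and $a\times 0=0$; and $(a+b)\times c=a\times c+b\times c$ for all $a,b,c$. *)

From HB Require Import structures.
From mathcomp Require Import all_boot all_order all_algebra all_fingroup.
Set Implicit Arguments. Unset Strict Implicit. Unset Printing Implicit Defensive.
Import GRing.Theory.
Local Open Scope ring_scope.

Definition elem_sym (R : comPzSemiRingType) (m : nat) (alpha : 'I_m -> R) (k : nat) : R :=
  \sum_(S : {set 'I_m} | #|S| == k) \prod_(i in S) alpha i.

(* Sylvester matrix (0-based indices).  Rows r < n: entry a_k at column r + k
   (0 <= k <= m); rows r = n + i (i < m): entry b_k at column i + k (0 <= k <= n). *)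
Definition sylvester (R : comPzSemiRingType) (m n : nat)
  (a b : nat -> R) : 'M[R]_(m + n) :=
  \matrix_(r < m + n, c < m + n)
    if (r < n)%N then
      (if ((r <= c) && (c <= r + m))%N then a (c - r)%N else 0)
    else
      (if (((r - n) <= c) && (c <= (r - n) + n))%N then b (c - (r - n))%N else 0).

Definition permanent (R : comPzSemiRingType) (N : nat) (M : 'M[R]_N) : R :=
  \sum_(s : 'S_N) \prod_(i < N) M i (s i).

(* In an idempotent semiring, x ≼ y :<-> x + y = y is a partial order compatible
   with + and *, and a finite sum is the least upper bound of its terms; hence
   R = S amounts to R ≼ S and S ≼ R.

   R ≼ S: bounding each prod_i (alpha_i + beta_j) by sum_k a_k beta_j^(m-k) and
   expanding, every resulting monomial prod_j a_(kappa j) beta_j^(m - kappa j) is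
   dominated by the term of the permutation that interleaves the rows of the
   Sylvester matrix along the staircase determined by kappa.

   S ≼ R: the sequences a and b are log-concave (a_p a_q ≼ a_u a_v whenever
   p <= u, v and u + v = p + q), so uncrossing two rows of the same block never
   decreases a permutation term, which reduces to permutations increasing on
   each block.  Such a term is prod_r a_(k r) * prod_i b_(l i) for a staircase
   l; expanding each b_(l i) over subsets of the beta's, a compression
   (down-shift) argument, again driven by log-concavity of a, bounds every
   resulting monomial by one of R. *)

From HB Require Import structures.
From mathcomp Require Import all_boot all_order all_algebra all_fingroup.
From mathcomp Require Import zify.
Set Implicit Arguments. Unset Strict Implicit. Unset Printing Implicit Defensive.
Import GRing.Theory.
Local Open Scope ring_scope.

Definition natle (R : comPzSemiRingType) (x y : R) := x + y = y.
Notation "x ≼ y" := (natle x y) (at level 70, no associativity).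

Section NaturalOrder.
Variable R : comPzSemiRingType.
Hypothesis addrr : forall x : R, x + x = x.
Implicit Types x y z : R.

Lemma natle_refl x : x ≼ x. Proof. exact: addrr. Qed.

Lemma natle_trans y x z : x ≼ y -> y ≼ z -> x ≼ z.
Proof. by rewrite /natle => xy yz; rewrite -yz addrA xy. Qed.

Lemma natle_anti x y : x ≼ y -> y ≼ x -> x = y.
Proof. by rewrite /natle => xy yx; rewrite -xy addrC yx. Qed.

Lemma natle0r x : 0 ≼ x. Proof. exact: add0r. Qed.

Lemma natle_addl x y : x ≼ x + y. Proof. by rewrite /natle addrA addrr. Qed.

Lemma natleMr z x y : x ≼ y -> x * z ≼ y * z.
Proof. by rewrite /natle => xy; rewrite -mulrDl xy. Qed.

Lemma natleM x y x' y' : x ≼ y -> x' ≼ y' -> x * x' ≼ y * y'.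
Proof.
move=> xy xy'; apply: natle_trans (natleMr x' xy) _.
by rewrite ![y * _]mulrC; apply: natleMr.
Qed.

Variables (I : finType) (P : pred I).

Lemma sum_natle (F : I -> R) y : (forall i, P i -> F i ≼ y) -> \sum_(i | P i) F i ≼ y.
Proof.
move=> Fy; apply: (big_ind (fun u => u ≼ y)) => //; first exact: natle0r.
by move=> u v uy vy; rewrite /natle -addrA vy uy.
Qed.

Lemma natle_sum_cond (F : I -> R) i : P i -> F i ≼ \sum_(i | P i) F i.
Proof. by move=> Pi; rewrite (bigD1 i) //=; apply: natle_addl. Qed.

Lemma natle_prod (F G : I -> R) :
  (forall i, P i -> F i ≼ G i) -> \prod_(i | P i) F i ≼ \prod_(i | P i) G i.
Proof.
by move=> FG; apply: (big_ind2 (@natle R)) => // *; apply: natleM.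
Qed.

End NaturalOrder.

Definition log_concave (R : comPzSemiRingType) (a : nat -> R) :=
  forall p q u v, (p <= u)%N -> (p <= v)%N -> (u + v = p + q)%N -> a p * a q ≼ a u * a v.

Section ElementarySymmetric.
Variables (R : comPzSemiRingType) (m : nat) (alpha : 'I_m -> R).
Local Notation e := (elem_sym alpha).

Lemma elem_sym_eq0 k : (m < k)%N -> e k = 0.
Proof.
move=> ltmk; rewrite /elem_sym big_pred0 // => S; apply/negbTE/eqP => cardS.
by have := max_card S; rewrite card_ord cardS leqNgt ltmk.
Qed.

Lemma prod_addr_sets x :
  \prod_(i < m) (alpha i + x) =
  \sum_(S : {set 'I_m}) (\prod_(i in S) alpha i) * x ^+ (m - #|S|).
Proof.
rewrite -[LHS](eq_bigr _ (fun i _ => big_bool _ (fun b => if b then alpha i else x))).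
rewrite bigA_distr_bigA /= (reindex (fun S : {set 'I_m} => [ffun i => i \in S])) /=; last first.
  by exists (fun f => [set i | f i]) => [S _|f _]; apply/setP || apply/ffunP;
     move=> i; rewrite !(inE, ffunE).
apply: eq_bigr => S _; rewrite (bigID (mem S)) /=; congr (_ * _).
  by apply: eq_bigr => i Si; rewrite ffunE Si.
rewrite (eq_bigr (fun _ => x)) => [|i /negbTE Si]; last by rewrite ffunE Si.
by rewrite prodr_const -[X in _ ^+ (X - _)](card_ord m) -(cardC S) addKn.
Qed.

Hypothesis addrr : forall x : R, x + x = x.

Lemma natle_elem_sym (S : {set 'I_m}) : \prod_(i in S) alpha i ≼ e #|S|.
Proof. by rewrite /elem_sym (bigD1 S) //=; apply: natle_addl. Qed.

Lemma elem_symX_natle k x : (k <= m)%N -> e k * x ^+ (m - k) ≼ \prod_(i < m) (alpha i + x).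
Proof.
move=> lekm; rewrite prod_addr_sets /elem_sym mulr_suml.
apply: sum_natle => S /eqP <-; exact: (natle_sum_cond addrr (P := predT)).
Qed.

Lemma prod_addr_natle x : \prod_(i < m) (alpha i + x) ≼ \sum_(k < m.+1) e k * x ^+ (m - k).
Proof.
rewrite prod_addr_sets; apply: sum_natle => S _.
have ltSm : (#|S| < m.+1)%N by rewrite ltnS -[X in (_ <= X)%N]card_ord max_card.
apply: natle_trans (natle_sum_cond addrr _ (isT : predT (Ordinal ltSm)))
  => /=; apply/natleMr/natle_elem_sym.
Qed.

Lemma elem_symM_step p q : (p < q)%N -> e p * e q ≼ e p.+1 * e q.-1.
Proof.
move=> ltpq; rewrite /elem_sym mulr_suml; apply: sum_natle => S /eqP cardS.
rewrite mulr_sumr; apply: sum_natle => T /eqP cardT.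
have [x] : exists x, x \in T :\: S.
  apply/set0Pn; rewrite -card_gt0 cardsD subn_gt0 cardT.
  by apply: leq_ltn_trans ltpq; rewrite -cardS subset_leq_card ?subsetIr.
rewrite inE => /andP [xS xT].
rewrite (big_setD1 x xT) /= mulrA (mulrC _ (alpha x)) -(big_setU1 _ xS) /=.
have cardxS : #|x |: S| = p.+1 by rewrite cardsU1 xS cardS.
have cardTx : #|T :\ x| = q.-1 by rewrite -cardT (cardsD1 x T) xT.
by apply: natleM; rewrite -?cardxS -?cardTx; apply: natle_elem_sym.
Qed.

Lemma elem_sym_log_concave : log_concave e.
Proof.
suff shift d p q : (p + d.*2 <= q)%N -> e p * e q ≼ e (p + d) * e (q - d).
  move=> p q u v; wlog leuv : u v / (u <= v)%N => [hwlog pu pv uv|pu _ uv].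
    case: (leqP u v) => [leuv|/ltnW levu]; first exact: hwlog.
    by rewrite [e u * _]mulrC; apply: hwlog; rewrite // addnC.
  have -> : u = (p + (u - p))%N by lia.
  have -> : v = (q - (u - p))%N by lia.
  by apply: shift; lia.
elim: d => [|d IHd] le_q; first by rewrite addn0 subn0; apply: natle_refl.
apply: natle_trans (IHd _) _; first by lia.
rewrite addnS subnS; apply: elem_symM_step; lia.
Qed.

End ElementarySymmetric.

Lemma card_set_sum (T : finType) (P : pred T) : #|[set i | P i]| = (\sum_i P i)%N.
Proof. by rewrite -sum1dep_card big_mkcond. Qed.

Lemma sum_ord_bool_leq n (P : pred 'I_n) : (\sum_(i < n) P i <= n)%N.
Proof. by rewrite -[X in (_ <= X)%N]card_ord -card_set_sum max_card. Qed.

Lemma sum_ord_ltn n x : (\sum_(y < n) (y < x) = minn n x)%N.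
Proof.
elim: n => [|n IHn]; first by rewrite big_ord0 min0n.
by rewrite big_ord_recr /= IHn; case: (ltnP n x) => /=; lia.
Qed.

Lemma sum_ord_ltn_leq n x : (x <= n)%N -> (\sum_(y < n) (y < x) = x)%N.
Proof. by move=> le_xn; rewrite sum_ord_ltn (minn_idPr le_xn). Qed.

Lemma sum_ord_geq n x : (x <= n)%N -> (\sum_(y < n) (x <= y) = n - x)%N.
Proof.
move=> le_xn; have : (\sum_(y < n) (y < x) + \sum_(y < n) (x <= y) = n)%N.
  rewrite -big_split (eq_bigr (fun _ => 1%N)) => [|y _]; last by case: ltnP.
  by rewrite sum_nat_const card_ord muln1.
by rewrite sum_ord_ltn_leq //; lia.
Qed.

Lemma sum_perm_ltn n (s : 'S_n) (x : 'I_n) : (\sum_(t < n) (s t < x) = x)%N.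
Proof.
rewrite (reindex_inj (@perm_inj _ s^-1)) /=.
by under eq_bigr => t _ do rewrite permKV; rewrite sum_ord_ltn_leq // ltnW.
Qed.

Lemma ltn_sum_at (I : finType) (i0 : I) (f g : I -> nat) :
  (forall i, f i <= g i)%N -> (f i0 < g i0)%N -> (\sum_i f i < \sum_i g i)%N.
Proof.
move=> le_fg lt_fg0; rewrite (bigD1 i0) //= [X in (_ < X)%N](bigD1 i0) //=.
by rewrite -addSn leq_add // leq_sum.
Qed.

Lemma down_closed_ord n (A : {set 'I_n}) :
  (forall j j' : 'I_n, (j < j')%N -> j' \in A -> j \in A) ->
  forall x : 'I_n, (x \in A) = (x < #|A|)%N.
Proof.
move=> downA x; have cardI k : #|[set y : 'I_n | (y < k)%N]| = minn n k.
  by rewrite card_set_sum sum_ord_ltn.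
apply/idP/idP => [xA | ltxA].
  have : [set y : 'I_n | (y < x.+1)%N] \subset A.
    apply/subsetP => y; rewrite inE ltnS leq_eqVlt => /orP [/eqP/val_inj -> //|].
    by move/downA; apply.
  by move/subset_leq_card; rewrite cardI (minn_idPr (ltn_ord x)).
apply: contraLR ltxA => xA; rewrite -leqNgt.
have : A \subset [set y : 'I_n | (y < x)%N].
  apply/subsetP => y yA; rewrite inE ltnNge; apply: contra xA => le_xy.
  by case: ltngtP le_xy => // [/downA/(_ yA) | /val_inj ->].
by move/subset_leq_card; rewrite cardI leq_min => /andP [].
Qed.

Lemma ltn_count_mono m (l : nat -> nat) v r : {homo l : i j / (i <= j)%N} ->
  (v < m)%N -> (v < \sum_(i < m) (l i <= r))%N = (l v <= r)%N.
Proof.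
move=> l_mono lt_vm; apply/idP/idP => [|le_lr]; last first.
  rewrite -[X in (X <= _)%N](sum_ord_ltn_leq lt_vm); apply: leq_sum => i _.
  by case: ltnP => //= /[!ltnS] le_iv; rewrite (leq_trans (l_mono _ _ le_iv) le_lr).
apply: contraLR; rewrite -leqNgt -ltnNge => lt_rl.
rewrite -[X in (_ <= X)%N](sum_ord_ltn_leq (ltnW lt_vm)); apply: leq_sum => i _.
case: (leqP (l i) r) => //= le_lr; rewrite lt0b ltnNge; apply: contraL le_lr => le_vi.
by rewrite -ltnNge (leq_trans lt_rl (l_mono _ _ le_vi)).
Qed.

Lemma sum_leq_homo n (f : 'I_n -> nat) :
  {homo (fun v => \sum_(j < n) (f j <= v))%N : u v / (u <= v)%N}.
Proof.
move=> u v le_uv; apply: leq_sum => j _.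
by case: (leqP (f j) u) => //= le_ju; rewrite (leq_trans le_ju le_uv).
Qed.

Lemma prod_count (R : comPzSemiRingType) n (F : nat -> R) (g : 'I_n -> nat) B :
  (forall r, g r < B)%N -> \prod_(r < n) F (g r) = \prod_(v < B) F v ^+ (\sum_(r < n) (g r == v)).
Proof.
move=> g_lt.
have F_prod r : F (g r) = \prod_(v < B) (if g r == v then F v else 1).
  rewrite (bigD1 (Ordinal (g_lt r))) //= eqxx big1 ?mulr1 // => v.
  by rewrite -(inj_eq val_inj) /= eq_sym => /negbTE ->.
rewrite (eq_bigr _ (fun r _ => F_prod r)) exchange_big /=; apply: eq_bigr => v _.
by rewrite -big_mkcond prodr_const -sum1_card big_mkcond.
Qed.

Lemma eq_prod_count_leq (R : comPzSemiRingType) n (F : nat -> R) (g h : 'I_n -> nat) B :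
  (forall r, g r < B)%N -> (forall r, h r < B)%N ->
  (forall v, \sum_(r < n) (g r <= v) = \sum_(r < n) (h r <= v))%N ->
  \prod_(r < n) F (g r) = \prod_(r < n) F (h r).
Proof.
move=> g_lt h_lt eq_le; rewrite (prod_count F g_lt) (prod_count F h_lt).
apply: eq_bigr => v _; congr (_ ^+ _); move: (nat_of_ord v) => {}v.
have split_le (f : 'I_n -> nat) :
    (\sum_(r < n) (f r <= v) = \sum_(r < n) (f r < v) + \sum_(r < n) (f r == v))%N.
  by rewrite -big_split; apply: eq_bigr => r _; case: ltngtP.
have sum_lt (f : 'I_n -> nat) :
    (\sum_(r < n) (f r < v) = if v is w.+1 then \sum_(r < n) (f r <= w) else 0)%N.
  by case: v {split_le} => [|w]; [rewrite big1 | apply: eq_bigr].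
have := split_le g; have := split_le h; rewrite !sum_lt eq_le.
by case: v {sum_lt split_le} => [|w]; rewrite ?eq_le; lia.
Qed.

Section Compression.
Variables (R : comPzSemiRingType) (a : nat -> R) (m n : nat).
Implicit Types F : 'I_m -> {set 'I_n}.

(* A family F indexes the monomial prod_i prod_(j in F i) beta_j of
   prod_i b_(#|F i|); [avoid_weight F] is the a-part that multiplies it inside R,
   [size_weight F] the a-part of the matching Sylvester term. *)
Definition avoiders F (x : 'I_n) := #|[set i | x \notin F i]|.
Definition avoid_weight F := \prod_(x < n) a (avoiders F x).
Definition size_weight F := \prod_(r < n) a (\sum_(i < m) (#|F i| <= r))%N.
Definition mass F := (\sum_(i < m) \sum_(x in F i) (x : nat))%N.

Definition compress (j j' : 'I_n) F i :=
  if (j' \in F i) && (j \notin F i) then j |: (F i :\ j') else F i.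

Lemma size_weight_down_closed F :
  (forall i (j j' : 'I_n), (j < j')%N -> j' \in F i -> j \in F i) ->
  size_weight F = avoid_weight F.
Proof.
move=> downF; apply: eq_bigr => x _; congr (a _).
rewrite /avoiders card_set_sum; apply: eq_bigr => i _.
by rewrite (down_closed_ord (downF i)) -leqNgt.
Qed.

Section CompressStep.
Variables (j j' : 'I_n) (F : 'I_m -> {set 'I_n}).
Hypothesis lt_jj' : (j < j')%N.
Let neq_jj' : j != j'. Proof. by rewrite neq_ltn lt_jj'. Qed.

Lemma card_compress i : #|compress j j' F i| = #|F i|.
Proof.
rewrite /compress; case: ifP => // /andP [j'F jF].
by rewrite cardsU1 (cardsD1 j' (F i)) j'F !inE negb_and jF orbT.
Qed.

Lemma size_weight_compress : size_weight (compress j j' F) = size_weight F.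
Proof.
by apply: eq_bigr => r _; congr (a _); apply: eq_bigr => i _; rewrite card_compress.
Qed.

Lemma mass_compress i0 : j' \in F i0 -> j \notin F i0 -> (mass (compress j j' F) < mass F)%N.
Proof.
rewrite /mass; have mass_i i : (j' \in F i) && (j \notin F i) ->
    (\sum_(x in compress j j' F i) x + j' = \sum_(x in F i) x + j)%N.
  move=> /[dup] moved /andP [j'F jF]; rewrite /compress moved.
  rewrite big_setU1 /= ?(big_setD1 j' j'F) /= ?inE ?negb_and ?jF ?orbT //.
  by rewrite addnAC [RHS]addnAC [(j + _)%N]addnC.
move=> j'F0 jF0; apply: (@ltn_sum_at 'I_m i0) => [i|] /=.
  case: (boolP ((j' \in F i) && (j \notin F i))) => [/mass_i|moved].
    by move=> sum_eq; rewrite -(leq_add2r j') sum_eq leq_add2l ltnW.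
  by rewrite /compress (negbTE moved).
move: (mass_i i0); rewrite j'F0 jF0 => /(_ isT) sum_eq.
by rewrite -(ltn_add2r j') sum_eq ltn_add2l.
Qed.

Hypothesis a_lc : log_concave a.

Lemma avoid_weight_compress : avoid_weight (compress j j' F) ≼ avoid_weight F.
Proof.
have split_jj' (G : 'I_n -> R) :
    \prod_(x < n) G x = G j * G j' * \prod_(x | (x != j) && (x != j')) G x.
  by rewrite (bigD1 j) //= (bigD1 j') 1?eq_sym //= mulrA.
rewrite /avoid_weight !split_jj'.
under eq_bigr => x /andP [xj xj'].
  have -> : avoiders (compress j j' F) x = avoiders F x.
    apply: eq_card => i; rewrite !inE /compress; case: ifP => // _.
    by rewrite !inE (negbTE xj) (negbTE xj').
  over.
apply: natleMr.
set A := [set i | j \notin F i]; set B := [set i | j' \notin F i].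
have -> : avoiders (compress j j' F) j = #|A :&: B|.
  by apply: eq_card => i; rewrite !inE /compress; case: ifP => /=;
    rewrite ?inE ?eqxx //=; case: (j \in F i); case: (j' \in F i).
have -> : avoiders (compress j j' F) j' = #|A :|: B|.
  by apply: eq_card => i; rewrite !inE /compress; case: ifP => /=;
    rewrite ?inE ?eqxx ?(eq_sym j') ?(negbTE neq_jj') //=;
    case: (j \in F i); case: (j' \in F i).
apply: a_lc; rewrite ?subset_leq_card ?subsetIl ?subsetIr //.
by rewrite [RHS]addnC cardsUI.
Qed.

End CompressStep.

Hypothesis addrr : forall x : R, x + x = x.
Hypothesis a_lc : log_concave a.

Lemma size_weight_natle F : size_weight F ≼ avoid_weight F.
Proof.
have [k] := ubnP (mass F); elim: k F => // k IHk F lt_mass.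
have [downF|] := boolP [forall i, forall j : 'I_n, forall j' : 'I_n,
                          ((j < j')%N && (j' \in F i)) ==> (j \in F i)].
  rewrite size_weight_down_closed; first exact: natle_refl.
  move=> i j j' lt_jj' j'F; move/forallP/(_ i)/forallP/(_ j)/forallP/(_ j'): downF.
  by rewrite lt_jj' j'F.
case/forallPn => i0 /forallPn [j /forallPn [j']].
rewrite negb_imply => /andP [/andP [lt_jj' j'F] jF].
rewrite -(size_weight_compress j j' F).
apply: natle_trans _ (avoid_weight_compress F lt_jj' a_lc).
apply: IHk; rewrite -ltnS; apply: (leq_trans _ lt_mass).
by rewrite ltnS (mass_compress lt_jj' j'F jF).
Qed.

End Compression.

Definition band (R : comPzSemiRingType) (c : nat -> R) (o k : nat) : R :=
  if (o <= k)%N then c (k - o)%N else 0.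

Lemma band_exchange (R : comPzSemiRingType) (c : nat -> R) o1 o2 k1 k2 :
  log_concave c -> (o1 < o2)%N -> (k2 < k1)%N ->
  band c o1 k1 * band c o2 k2 ≼ band c o1 k2 * band c o2 k1.
Proof.
rewrite /band => c_lc lt_o lt_k.
case: (leqP o1 k1) => [le1|_]; last by rewrite mul0r; apply: natle0r.
case: (leqP o2 k2) => [le2|_]; last by rewrite mulr0; apply: natle0r.
rewrite (leq_trans (ltnW lt_o) le2) (leq_trans le2 (ltnW lt_k)) mulrC.
by apply: c_lc; lia.
Qed.

Section SylvesterTerms.
Variables (R : comPzSemiRingType) (m n : nat) (a b : nat -> R).
Hypotheses (a_eq0 : forall k, (m < k)%N -> a k = 0) (b_eq0 : forall k, (n < k)%N -> b k = 0).
Local Notation N := (m + n)%N.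
Local Notation M := (sylvester m n a b).

Lemma sylvesterE (t c : 'I_N) :
  M t c = if (t < n)%N then band a t c else band b (t - n) c.
Proof.
have band_cut (d : nat -> R) B o k : (forall k, (B < k)%N -> d k = 0) ->
    (if ((o <= k) && (k <= o + B))%N then d (k - o)%N else 0) = band d o k.
  move=> d_eq0; rewrite /band; case: (leqP o k) => //= le_ok.
  by case: leqP => // lt_k; rewrite d_eq0 //; lia.
by rewrite mxE; case: ifP => _; apply: band_cut.
Qed.

Definition arow (r : 'I_n) : 'I_N := cast_ord (addnC n m) (lshift m r).
Definition brow (i : 'I_m) : 'I_N := cast_ord (addnC n m) (rshift n i).

Lemma big_rows (T : Type) (idx : T) (op : Monoid.com_law idx) (F : 'I_N -> T) :
  \big[op/idx]_(t < N) F t =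
  op (\big[op/idx]_(r < n) F (arow r)) (\big[op/idx]_(i < m) F (brow i)).
Proof.
rewrite (reindex (cast_ord (addnC n m))) /=; last first.
  by exists (cast_ord (addnC m n)) => t _; apply: val_inj.
exact: big_split_ord.
Qed.

Lemma sylvester_arow r c : M (arow r) c = band a r c.
Proof. by rewrite sylvesterE /= ltn_ord. Qed.

Lemma sylvester_brow i c : M (brow i) c = band b i c.
Proof. by rewrite sylvesterE /= ltnNge leq_addr addKn. Qed.

Definition perm_term (s : 'S_N) := \prod_(t < N) M t (s t).

(* The term of the block-sorted permutation sending b-row i to column i + l i
   and a-row r to column r + #|{i | l i <= r}|. *)
Definition path_term (l : 'I_m -> nat) :=
  \prod_(r < n) a (\sum_(i < m) (l i <= r))%N * \prod_(i < m) b (l i).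

Definition displacement (s : 'S_N) := (\sum_(t < N) t * s t)%N.

Definition block_sorted (s : 'S_N) :=
  forall t1 t2 : 'I_N, (t1 < t2)%N -> (t1 < n)%N = (t2 < n)%N -> (s t1 < s t2)%N.

Lemma displacement_ub s : (displacement s <= N * (N * N))%N.
Proof.
apply: (@leq_trans (\sum_(t < N) N * N)); last by rewrite sum_nat_const card_ord.
by apply: leq_sum => t _; rewrite leq_mul // ltnW.
Qed.

Hypotheses (a_lc : log_concave a) (b_lc : log_concave b).

Section Transposition.
Variables (s : 'S_N) (t1 t2 : 'I_N).
Hypotheses (lt_t : (t1 < t2)%N) (same_block : (t1 < n)%N = (t2 < n)%N) (inv : (s t2 < s t1)%N).
Local Notation s' := (tperm t1 t2 * s)%g.

Let big_pair (T : Type) (idx : T) (op : Monoid.com_law idx) (F : 'I_N -> T) :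
  \big[op/idx]_(t < N) F t =
  op (op (F t1) (F t2)) (\big[op/idx]_(t | (t != t1) && (t != t2)) F t).
Proof. by rewrite (bigD1 t1) //= (bigD1 t2) ?Monoid.mulmA // eq_sym neq_ltn lt_t. Qed.

Let tperm_off t : (t != t1) && (t != t2) -> s' t = s t.
Proof. by case/andP => ne1 ne2; rewrite permM tpermD // eq_sym. Qed.

Lemma displacement_tperm : (displacement s < displacement s')%N.
Proof.
rewrite /displacement !big_pair.
have -> : (\sum_(t | (t != t1) && (t != t2)) t * s' t =
           \sum_(t | (t != t1) && (t != t2)) t * s t)%N.
  by apply: eq_bigr => t /tperm_off ->.
rewrite !permM tpermL tpermR.
rewrite ltn_add2r; move: lt_t inv.
move: (nat_of_ord t1) (nat_of_ord t2) (nat_of_ord (s t1)) (nat_of_ord (s t2)) => x y u v.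
by move=> lt_xy lt_vu; change (x * u + y * v < x * v + y * u)%N; nia.
Qed.

Lemma perm_term_tperm : perm_term s ≼ perm_term s'.
Proof.
rewrite /perm_term !big_pair.
have -> : \prod_(t | (t != t1) && (t != t2)) M t (s' t) =
          \prod_(t | (t != t1) && (t != t2)) M t (s t).
  by apply: eq_bigr => t /tperm_off ->.
rewrite !permM tpermL tpermR.
apply: natleMr; rewrite !sylvesterE -same_block.
case: ifP => t1n; apply: band_exchange => //.
by move: same_block; rewrite t1n => /esym/negbT; rewrite -leqNgt; lia.
Qed.

End Transposition.

Lemma perm_term_natle_block_sorted (X : R) :
  (forall s, block_sorted s -> perm_term s ≼ X) -> forall s, perm_term s ≼ X.
Proof.
move=> sortedX s; have [k] := ubnP (N * (N * N) - displacement s).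
elim: k s => // k IHk s lt_k.
have [sorted_s|] := boolP [forall t1 : 'I_N, forall t2 : 'I_N,
                     ((t1 < t2)%N && ((t1 < n)%N == (t2 < n)%N)) ==> (s t1 < s t2)%N].
  apply: sortedX => t1 t2 lt_t same.
  by move/forallP/(_ t1)/forallP/(_ t2): sorted_s; rewrite lt_t same eqxx.
case/forallPn => t1 /forallPn [t2]; rewrite negb_imply -leqNgt.
case/andP => /andP [lt_t /eqP same]; rewrite leq_eqVlt.
case/orP => [/eqP/val_inj/perm_inj eq_t|inv]; first by move: lt_t; rewrite eq_t ltnn.
apply: natle_trans (perm_term_tperm lt_t same inv) (IHk _ _).
have := displacement_tperm lt_t same inv.
by have := displacement_ub (tperm t1 t2 * s)%g; lia.
Qed.

Section BlockSorted.
Variable s : 'S_N.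
Hypothesis s_sorted : block_sorted s.
Local Notation cf r := (nat_of_ord (s (arow r))).
Local Notation cg i := (nat_of_ord (s (brow i))).

Let ltn_cf r r' : (cf r' < cf r)%N = (r' < r)%N.
Proof.
case: (ltngtP r' r) => [lt_r|lt_r|/val_inj -> ]; last by rewrite ltnn.
  by apply: s_sorted; rewrite //= !ltn_ord.
by apply/negbTE; rewrite -leqNgt ltnW // s_sorted //= !ltn_ord.
Qed.

Let ltn_cg i i' : (cg i' < cg i)%N = (i' < i)%N.
Proof.
have brow_n j : (brow j < n)%N = false by rewrite /= ltnNge leq_addr.
case: (ltngtP i' i) => [lt_i|lt_i|/val_inj -> ]; last by rewrite ltnn.
  by apply: s_sorted; rewrite /= ?ltn_add2l ?brow_n.
by apply/negbTE; rewrite -leqNgt ltnW // s_sorted /= ?ltn_add2l ?brow_n.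
Qed.

Let count_below (x : 'I_N) : (\sum_(r < n) (cf r < x) + \sum_(i < m) (cg i < x))%N = x.
Proof. by rewrite -[RHS](sum_perm_ltn s x) big_rows. Qed.

Lemma perm_term_block_sorted : exists l, perm_term s = path_term l.
Proof.
pose l i := (\sum_(r < n) (cf r < cg i))%N.
have cfE r : cf r = (r + \sum_(i < m) (cg i < cf r))%N.
  rewrite -{1}(count_below (s (arow r))); congr (_ + _)%N.
  by under eq_bigr => r' _ do rewrite ltn_cf; rewrite sum_ord_ltn_leq // ltnW.
have cgE i : cg i = (l i + i)%N.
  rewrite -{1}(count_below (s (brow i))); congr (_ + _)%N.
  by under eq_bigr => i' _ do rewrite ltn_cg; rewrite sum_ord_ltn_leq // ltnW.
have crossE r i : (cg i < cf r)%N = (l i <= r)%N.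
  apply/idP/idP => [lt_gf|].
    rewrite -[X in (_ <= X)%N](sum_ord_ltn_leq (ltnW (ltn_ord r))).
    apply: leq_sum => r' _; case: (ltnP (cf r') (cg i)) => //= lt_fg.
    by rewrite -ltn_cf (ltn_trans lt_fg lt_gf).
  apply: contraLR; rewrite -leqNgt -ltnNge => le_fg.
  have lt_fg : (cf r < cg i)%N.
    rewrite ltn_neqAle le_fg andbT; apply/eqP => /val_inj/perm_inj/(congr1 val) /= eq_r.
    by move: (ltn_ord r); rewrite eq_r ltnNge leq_addr.
  rewrite -(sum_ord_ltn_leq (ltn_ord r)); apply: leq_sum => r' _.
  case: (ltnP r' r.+1) => //= le_r'r.
  have le_cf : (cf r' <= cf r)%N by rewrite leqNgt ltn_cf -leqNgt -ltnS.
  by rewrite (leq_ltn_trans le_cf lt_fg).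
exists l; rewrite /perm_term big_rows; congr (_ * _).
  apply: eq_bigr => r _; rewrite sylvester_arow /band cfE leq_addr addKn; congr (a _).
  by apply: eq_bigr => i _; rewrite crossE.
by apply: eq_bigr => i _; rewrite sylvester_brow /band cgE leq_addl addnK.
Qed.

End BlockSorted.

Section Interleave.
Variable l : nat -> nat.
Hypotheses (l_mono : {homo l : i j / (i <= j)%N}) (l_le : forall i, (l i <= n)%N).
Let k r := (\sum_(i < m) (l i <= r))%N.

Let k_le r : (k r <= m)%N.
Proof. by rewrite sum_ord_bool_leq. Qed.

Let k_mono : {homo k : r r' / (r <= r')%N}.
Proof.
move=> r r' le_r; apply: leq_sum => i _.
by case: (leqP (l i) r) => //= le_lr; rewrite (leq_trans le_lr le_r).
Qed.

(* The two kinds of rows never land in the same column because, by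
   [ltn_count_mono], k and l are mutually inverse staircases. *)
Let pos t := if (t < n)%N then (t + k t)%N else (t - n + l (t - n))%N.

Let pos_lt (t : 'I_N) : (pos t < N)%N.
Proof.
rewrite /pos; case: ifP => lt_tn; first by have := k_le t; lia.
by have := l_le (t - n)%N; have := ltn_ord t; move/negbT: lt_tn; lia.
Qed.

Let pos_inj (t1 t2 : 'I_N) : pos t1 = pos t2 -> t1 = t2.
Proof.
have cross r i : (r < n)%N -> (i < m)%N -> (r + k r)%N != (i + l i)%N.
  move=> lt_rn lt_im; have := ltn_count_mono r l_mono lt_im; rewrite -/(k r).
  by case: (leqP (l i) r) => [le_lr /idP|lt_rl /negbT]; rewrite -?leqNgt; lia.
rewrite /pos => eq_pos; apply: val_inj => /=; have := ltn_ord t1; have := ltn_ord t2.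
case: ifP eq_pos => lt1; case: ifP => lt2 eq_pos lt_t2 lt_t1.
- case: (ltngtP t1 t2) => // lt_t; [have := k_mono (ltnW lt_t) | have := k_mono (ltnW lt_t)]; lia.
- by have := cross t1 (t2 - n)%N lt1; rewrite eq_pos; move/negbT: lt2; lia.
- by have := cross t2 (t1 - n)%N lt2; rewrite -eq_pos; move/negbT: lt1; lia.
- move/negbT: lt1; move/negbT: lt2; rewrite -!leqNgt => le2 le1.
  case: (ltngtP (t1 - n)%N (t2 - n)%N) => lt_t;
    [have := l_mono (ltnW lt_t) | have := l_mono (ltnW lt_t) | ]; lia.
Qed.

Lemma path_term_interleave : exists s, perm_term s = path_term (fun i : 'I_m => l i).
Proof.
have f_inj : injective (fun t => Ordinal (pos_lt t)).
  by move=> t1 t2 /(congr1 val); apply: pos_inj.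
exists (perm f_inj); rewrite /perm_term big_rows; congr (_ * _).
  apply: eq_bigr => r _; rewrite permE sylvester_arow /band /pos /= ltn_ord.
  by rewrite leq_addr addKn.
apply: eq_bigr => i _; rewrite permE sylvester_brow /band /pos /=.
by rewrite ltnNge leq_addr /= addKn leq_addr addKn.
Qed.

End Interleave.

End SylvesterTerms.

Section Resultant.
Variables (R : comPzSemiRingType) (m n : nat) (alpha : 'I_m -> R) (beta : 'I_n -> R).
Hypothesis addrr : forall x : R, x + x = x.
Local Notation a := (elem_sym alpha).
Local Notation b := (elem_sym beta).
Local Notation resultant := (\prod_(i < m) \prod_(j < n) (alpha i + beta j)).

Lemma prod_set_family (F : 'I_m -> {set 'I_n}) :
  \prod_(i < m) \prod_(j in F i) beta j =
  \prod_(j < n) beta j ^+ (\sum_(i < m) (j \in F i)).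
Proof.
under eq_bigr => i _ do rewrite big_mkcond /=.
rewrite exchange_big /=; apply: eq_bigr => j _.
by rewrite -big_mkcond prodr_const -sum1_card big_mkcond.
Qed.

Lemma avoid_weight_natle_resultant (F : 'I_m -> {set 'I_n}) :
  avoid_weight a F * \prod_(i < m) \prod_(j in F i) beta j ≼ resultant.
Proof.
rewrite prod_set_family /avoid_weight -big_split exchange_big /=.
apply: natle_prod => // j _.
have count_m : (\sum_(i < m) (j \in F i) + avoiders F j = m)%N.
  rewrite /avoiders card_set_sum -big_split /= -[RHS]card_ord -sum1_card.
  by apply: eq_bigr => i _; case: (j \in F i).
have -> : (\sum_(i < m) (j \in F i) = m - avoiders F j)%N by lia.
by apply: elem_symX_natle => //; lia.
Qed.

Lemma path_term_natle_resultant (l : 'I_m -> nat) : path_term n a b l ≼ resultant.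
Proof.
have bE i : b (l i) = \sum_(B : {set 'I_n}) (if #|B| == l i then \prod_(j in B) beta j else 0).
  by rewrite /elem_sym big_mkcond.
rewrite /path_term (eq_bigr _ (fun i _ => bE i)) bigA_distr_bigA /= mulr_sumr.
apply: sum_natle => F _.
have [sizeF | /forallPn [i0 /negbTE sizeF0]] := boolP [forall i, #|F i| == l i]; last first.
  by rewrite (bigD1 i0) //= sizeF0 mul0r mulr0; apply: natle0r.
have {}sizeF i : #|F i| = l i by apply/eqP/(forallP sizeF).
under [in X in _ * X]eq_bigr => i _ do rewrite sizeF eqxx.
apply: natle_trans (avoid_weight_natle_resultant F); apply: natleMr.
have -> : \prod_(r < n) a (\sum_(i < m) (l i <= r))%N = size_weight a F.
  by apply: eq_bigr => r _; under eq_bigr => i _ do rewrite -sizeF.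
apply: size_weight_natle => //; exact: elem_sym_log_concave.
Qed.

Lemma choice_natle_path_term (kappa : 'I_n -> nat) : (forall j, kappa j <= m)%N ->
  \prod_(j < n) (a (kappa j) * beta j ^+ (m - kappa j)) ≼
  path_term n a b (fun i : 'I_m => \sum_(j < n) (kappa j <= i))%N.
Proof.
move=> kappa_le; set l := fun v => (\sum_(j < n) (kappa j <= v))%N.
rewrite /path_term big_split /=; apply: natleM.
  (* r |-> #|{i | l i <= r}| takes the values of kappa, with multiplicity. *)
  rewrite (@eq_prod_count_leq _ _ a _ (fun r => \sum_(i < m) (l i <= r))%N m.+1).
  - exact: natle_refl.
  - by move=> j; rewrite ltnS.
  - by move=> r; rewrite ltnS sum_ord_bool_leq.
  move=> v; case: (ltnP v m) => [lt_vm | le_mv].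
    under [RHS]eq_bigr => r _ do
      rewrite leqNgt (ltn_count_mono r (sum_leq_homo kappa) lt_vm) -ltnNge.
    by rewrite sum_ord_ltn_leq // sum_ord_bool_leq.
  have all_le (g : 'I_n -> nat) : (forall r, g r <= v)%N -> (\sum_(r < n) (g r <= v) = n)%N.
    move=> g_le; rewrite (eq_bigr (fun _ => 1%N)) => [|r _]; last by rewrite g_le.
    by rewrite sum_nat_const card_ord muln1.
  rewrite !all_le // => r; apply: leq_trans le_mv.
    by rewrite sum_ord_bool_leq.
  exact: kappa_le.
have -> : \prod_(j < n) beta j ^+ (m - kappa j) =
          \prod_(i < m) \prod_(j in [set j | (kappa j <= i)%N]) beta j.
  by rewrite prod_set_family; apply: eq_bigr => j _; under eq_bigr => i _ do rewrite inE;
     rewrite sum_ord_geq.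
apply: natle_prod => // i _; rewrite -card_set_sum.
exact: natle_elem_sym.
Qed.

Lemma resultant_natle_permanent : resultant ≼ permanent (sylvester m n a b).
Proof.
rewrite exchange_big /=.
have expand : \prod_(j < n) \prod_(i < m) (alpha i + beta j) ≼
                \prod_(j < n) \sum_(k < m.+1) a k * beta j ^+ (m - k).
  by apply: natle_prod => // j _; apply: prod_addr_natle.
apply: natle_trans expand _.
rewrite bigA_distr_bigA /=; apply: sum_natle => kappa _.
have kappa_le j : (kappa j <= m)%N by rewrite -ltnS.
have [|s sE] := path_term_interleave (elem_sym_eq0 alpha) (elem_sym_eq0 beta)
  (sum_leq_homo (fun j => kappa j : nat)).
  by move=> v; rewrite sum_ord_bool_leq.
apply: natle_trans (choice_natle_path_term kappa_le) _; rewrite -sE.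
exact: (natle_sum_cond addrr (perm_term a b)).
Qed.

Lemma permanent_natle_resultant : permanent (sylvester m n a b) ≼ resultant.
Proof.
apply: sum_natle => s _.
apply: (perm_term_natle_block_sorted (elem_sym_eq0 alpha) (elem_sym_eq0 beta)
          (elem_sym_log_concave alpha addrr) (elem_sym_log_concave beta addrr)) => {}s sorted_s.
have [l ->] := perm_term_block_sorted (elem_sym_eq0 alpha) (elem_sym_eq0 beta) sorted_s.
exact: path_term_natle_resultant.
Qed.

End Resultant.

Theorem mainTheorem1 (R : comPzSemiRingType)
  (Hidem : forall x : R, x + x = x)
  (m n : nat) (Hm : (1 <= m)%N) (Hn : (1 <= n)%N)
  (alpha : 'I_m -> R) (beta : 'I_n -> R) :
  \prod_(i < m) \prod_(j < n) (alpha i + beta j)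
  = permanent (sylvester m n (elem_sym alpha) (elem_sym beta)).
Proof.
apply: natle_anti; first exact: resultant_natle_permanent.
exact: permanent_natle_resultant.
Qed.
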